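(* Let $\mathfrak g_1,\mathfrak g_2$ be vector spaces and $\mathcal G=\mathfrak g_1\oplus\mathfrak g_2$. There is a one-to-one correspondence between matched pairs of Lie triple systems $(\mathfrak g_1,\mathfrak g_2;\rho_1,\rho_2)$ and strict twilled Lie triple system structures on $\mathcal G$ (with respect to $\mathfrak g_1,\mathfrak g_2$). It sends a matched pair to $\mathcal G$ with the bracket $$[x+u,y+v,z+w]_{\bowtie}=[x,y,z]_{\mathfrak g_1}+D_2(u,v)z+\rho_2(v,w)x-\rho_2(u,w)y+[u,v,w]_{\mathfrak g_2}+D_1(x,y)w+\rho_1(y,z)u-\rho_1(x,z)v,$$ and conversely sends a strict twilled Lie triple system $(\mathcal G,[\cdot,\cdot,\cdot]_{\mathcal G})$ to the restricted brackets on $\mathfrak g_1,\mathfrak g_2$ together with $\rho_1(x,y)u=[u,x,y]_2$ and $\rho_2(u,v)x=[x,u,v]_1$ ($x,y,z\in\mathfrak g_1$, $u,v,w\in\mathfrak g_2$).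
   Context: All vector spaces are over a field of characteristic $0$. A Lie triple system is a vector space with a trilinear bracket $[\cdot,\cdot,\cdot]$ satisfying $[x,x,y]=0$, $[x,y,z]+[y,z,x]+[z,x,y]=0$ and $[x,y,[z,w,t]]=[[x,y,z],w,t]+[z,[x,y,w],t]+[z,w,[x,y,t]]$. A representation of a Lie triple system $\mathfrak g$ on $V$ is a bilinear $\rho:\otimes^2\mathfrak g\to\mathfrak{gl}(V)$ with $D(x,y):=\rho(y,x)-\rho(x,y)$ such that $\rho(z,w)\rho(x,y)-\rho(y,w)\rho(x,z)-\rho(x,[y,z,w])+D(y,z)\rho(x,w)=0$ and $\rho([x,y,z],w)+\rho(z,[x,y,w])=[D(x,y),\rho(z,w)]$. A matched pair $(\mathfrak g_1,\mathfrak g_2;\rho_1,\rho_2)$ consists of Lie triple systems $(\mathfrak g_1,[\cdot,\cdot,\cdot]_{\mathfrak g_1})$, $(\mathfrak g_2,[\cdot,\cdot,\cdot]_{\mathfrak g_2})$, a representation $\rho_1$ of $\mathfrak g_1$ on $\mathfrak g_2$ and a representation $\rho_2$ of $\mathfrak g_2$ on $\mathfrak g_1$, with $D_1(x,y)=\rho_1(y,x)-\rho_1(x,y)$, $D_2(u,v)=\rho_2(v,u)-\rho_2(u,v)$, such that for all $x,y,z\in\mathfrak g_1$, $u,v,w\in\mathfrak g_2$: $\rho_2(u,v)[x,y,z]_{\mathfrak g_1}=[x,y,\rho_2(u,v)z]_{\mathfrak g_1}-\rho_2(D_1(x,y)u,v)z-\rho_2(u,D_1(x,y)v)z$; $[x,y,\rho_2(u,v)z]_{\mathfrak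 g_1}=\rho_2(u,D_1(x,y)v)z+\rho_2(\rho_1(z,y)u,v)x-\rho_2(\rho_1(z,x)u,v)y$; $[\rho_2(u,v)x,y,z]_{\mathfrak g_1}=\rho_2(u,\rho_1(y,z)v)x+D_2(v,\rho_1(x,y)u)z-\rho_2(v,\rho_1(x,z)u)y$; $\rho_1(x,y)[u,v,w]_{\mathfrak g_2}=[u,v,\rho_1(x,y)w]_{\mathfrak g_2}-\rho_1(D_2(u,v)x,y)w-\rho_1(x,D_2(u,v)y)w$; $[u,v,\rho_1(x,y)w]_{\mathfrak g_2}=\rho_1(x,D_2(u,v)y)w+\rho_1(\rho_2(w,v)x,y)u-\rho_1(\rho_2(w,u)x,y)v$; $[\rho_1(x,y)u,v,w]_{\mathfrak g_2}=\rho_1(x,\rho_2(v,w)y)u+D_1(y,\rho_2(u,v)x)w-\rho_1(y,\rho_2(u,w)x)v$. A strict twilled Lie triple system structure on $\mathcal G=\mathfrak g_1\oplus\mathfrak g_2$ is a Lie triple system bracket $[\cdot,\cdot,\cdot]_{\mathcal G}$ on $\mathcal G$ for which $\mathfrak g_1$ and $\mathfrak g_2$ are subalgebras and, writing $[a,b,c]_i$ for the $\mathfrak g_i$-component, $[x,y,w]_1=[u,y,z]_1=[x,v,z]_1=0$ and $[u,v,z]_2=[x,v,w]_2=[u,y,w]_2=0$ for all $x,y,z\in\mathfrak g_1,u,v,w\in\mathfrak g_2$ (i.e. the bracket maps tensors with exactly one $\mathfrak g_2$-factor into $\mathfrak g_2$ and with exactly two $\mathfrak g_2$-factors into $\mathfrak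 g_1$; equivalently the component $\hat\psi$ of bidegree $1|1$ vanishes). *)

From HB Require Import structures.
From mathcomp Require Import all_boot all_order all_algebra.
Set Implicit Arguments. Unset Strict Implicit. Unset Printing Implicit Defensive.
Import GRing.Theory.
Local Open Scope ring_scope.

Section LTS.
Variable K : fieldType.

Definition trilinear (V : lmodType K) (br : V -> V -> V -> V) : Prop :=
  (forall (a : K) x x' y z, br (a *: x + x') y z = a *: br x y z + br x' y z) /\
  (forall (a : K) x y y' z, br x (a *: y + y') z = a *: br x y z + br x y' z) /\
  (forall (a : K) x y z z', br x y (a *: z + z') = a *: br x y z + br x y z').

Definition lts (V : lmodType K) (br : V -> V -> V -> V) : Prop :=
  trilinear br /\
  (forall x y, br x x y = 0) /\
  (forall x y z, br x y z + br y z x + br z x y = 0) /\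
  (forall x y z w t,
     br x y (br z w t) = br (br x y z) w t + br z (br x y w) t + br z w (br x y t)).

Definition Dof (G V : lmodType K) (rho : G -> G -> V -> V) (x y : G) (v : V) : V :=
  rho y x v - rho x y v.

Definition lts_rep (G V : lmodType K) (br : G -> G -> G -> G)
    (rho : G -> G -> V -> V) : Prop :=
  (forall (a : K) x x' y v, rho (a *: x + x') y v = a *: rho x y v + rho x' y v) /\
  (forall (a : K) x y y' v, rho x (a *: y + y') v = a *: rho x y v + rho x y' v) /\
  (forall (a : K) x y v v', rho x y (a *: v + v') = a *: rho x y v + rho x y v') /\
  (forall x y z w v,
     rho z w (rho x y v) - rho y w (rho x z v) - rho x (br y z w) v
     + Dof rho y z (rho x w v) = 0) /\
  (forall x y z w v,
     rho (br x y z) w v + rho z (br x y w) v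
     = Dof rho x y (rho z w v) - rho z w (Dof rho x y v)).

Variables V1 V2 : lmodType K.

Definition matched_pair (br1 : V1 -> V1 -> V1 -> V1) (br2 : V2 -> V2 -> V2 -> V2)
    (rho1 : V1 -> V1 -> V2 -> V2) (rho2 : V2 -> V2 -> V1 -> V1) : Prop :=
  lts br1 /\ lts br2 /\ lts_rep br1 rho1 /\ lts_rep br2 rho2 /\
  (forall x y z u v,
     rho2 u v (br1 x y z)
     = br1 x y (rho2 u v z) - rho2 (Dof rho1 x y u) v z - rho2 u (Dof rho1 x y v) z) /\
  (forall x y z u v,
     br1 x y (rho2 u v z)
     = rho2 u (Dof rho1 x y v) z + rho2 (rho1 z y u) v x - rho2 (rho1 z x u) v y) /\
  (forall x y z u v,
     br1 (rho2 u v x) y z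
     = rho2 u (rho1 y z v) x + Dof rho2 v (rho1 x y u) z - rho2 v (rho1 x z u) y) /\
  (forall x y u v w,
     rho1 x y (br2 u v w)
     = br2 u v (rho1 x y w) - rho1 (Dof rho2 u v x) y w - rho1 x (Dof rho2 u v y) w) /\
  (forall x y u v w,
     br2 u v (rho1 x y w)
     = rho1 x (Dof rho2 u v y) w + rho1 (rho2 w v x) y u - rho1 (rho2 w u x) y v) /\
  (forall x y u v w,
     br2 (rho1 x y u) v w
     = rho1 x (rho2 v w y) u + Dof rho1 y (rho2 u v x) w - rho1 y (rho2 u w x) v).

Definition Gsp := (V1 * V2)%type.

Definition strict_twilled (brG : Gsp -> Gsp -> Gsp -> Gsp) : Prop :=
  lts brG /\
  (forall x y z : V1, (brG (x, 0) (y, 0) (z, 0)).2 = 0) /\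
  (forall u v w : V2, (brG (0, u) (0, v) (0, w)).1 = 0) /\
  (forall (x y : V1) (w : V2), (brG (x, 0) (y, 0) (0, w)).1 = 0) /\
  (forall (u : V2) (y z : V1), (brG (0, u) (y, 0) (z, 0)).1 = 0) /\
  (forall (x z : V1) (v : V2), (brG (x, 0) (0, v) (z, 0)).1 = 0) /\
  (forall (u v : V2) (z : V1), (brG (0, u) (0, v) (z, 0)).2 = 0) /\
  (forall (x : V1) (v w : V2), (brG (x, 0) (0, v) (0, w)).2 = 0) /\
  (forall (u w : V2) (y : V1), (brG (0, u) (y, 0) (0, w)).2 = 0).

Definition bowtie (br1 : V1 -> V1 -> V1 -> V1) (br2 : V2 -> V2 -> V2 -> V2)
    (rho1 : V1 -> V1 -> V2 -> V2) (rho2 : V2 -> V2 -> V1 -> V1)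
    (a b c : Gsp) : Gsp :=
  let: (x, u) := a in let: (y, v) := b in let: (z, w) := c in
  (br1 x y z + Dof rho2 u v z + rho2 v w x - rho2 u w y,
   br2 u v w + Dof rho1 x y w + rho1 y z u - rho1 x z v).

Definition res1 (brG : Gsp -> Gsp -> Gsp -> Gsp) (x y z : V1) : V1 :=
  (brG (x, 0) (y, 0) (z, 0)).1.
Definition res2 (brG : Gsp -> Gsp -> Gsp -> Gsp) (u v w : V2) : V2 :=
  (brG (0, u) (0, v) (0, w)).2.
Definition rho1_of (brG : Gsp -> Gsp -> Gsp -> Gsp) (x y : V1) (u : V2) : V2 :=
  (brG (0, u) (x, 0) (y, 0)).2.
Definition rho2_of (brG : Gsp -> Gsp -> Gsp -> Gsp) (u v : V2) (x : V1) : V1 :=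
  (brG (x, 0) (0, u) (0, v)).1.

End LTS.

From Stdlib Require Import FunctionalExtensionality.
From HB Require Import structures.
From mathcomp Require Import all_boot all_order all_algebra ring.
Set Implicit Arguments. Unset Strict Implicit. Unset Printing Implicit Defensive.
Import GRing.Theory.
Local Open Scope ring_scope.

(* Both brackets involved are trilinear, so an identity between them holds as
   soon as it holds when every argument lies in g1 or in g2.  On such homogeneous
   arguments the bowtie bracket reduces to a single term of its definition, and
   each of the 32 homogeneous instances of its fundamental identity (and likewise
   its skew-symmetry and Jacobi identity) is a signed sum of instances of the
   axioms of a matched pair; conversely, every axiom of a matched pair is one
   homogeneous instance of an identity of the bowtie bracket.  A strict twilled
   bracket agrees with the bowtie bracket of its restrictions on homogeneous
   arguments, by skew-symmetry and the Jacobi identity, hence everywhere. *)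

(* [int * V] with (m, x) (n, y) = (m n, n x + m y) is a commutative ring in which
   V is a square-zero ideal, so [ring] there decides identities in the group V. *)
Section TrivialExtension.
Variable V : zmodType.

Definition trivext := (int * V)%type.
HB.instance Definition _ := GRing.Zmodule.on trivext.

Definition trivext_mul (p q : trivext) : trivext := (p.1 * q.1, p.2 *~ q.1 + q.2 *~ p.1).

Lemma trivext_mulA : associative trivext_mul.
Proof.
move=> [a x] [b y] [c z]; congr (_, _); rewrite /= ?mulrA //.
by rewrite !mulrzDl -!mulrzA -!addrA (mulrC c a) (mulrC b a).
Qed.

Lemma trivext_mulC : commutative trivext_mul.
Proof. by move=> [a x] [b y]; rewrite /trivext_mul /= mulrC addrC. Qed.

Lemma trivext_mul1 : left_id ((1, 0) : trivext) trivext_mul.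
Proof. by move=> [a x]; rewrite /trivext_mul /= mul1r mul0rz add0r. Qed.

Lemma trivext_mulDl : left_distributive trivext_mul +%R.
Proof.
move=> [a x] [b y] [c z]; congr (_, _); rewrite /= ?mulrDl //.
by rewrite mulrzDl mulrzDr addrACA.
Qed.

Lemma trivext_one_neq0 : ((1, 0) : trivext) != 0.
Proof. by apply/eqP => -[]. Qed.

HB.instance Definition _ := GRing.Zmodule_isComNzRing.Build trivext
  trivext_mulA trivext_mulC trivext_mul1 trivext_mulDl trivext_one_neq0.

Definition trivext_in (x : V) : trivext := (0, x).

Lemma trivext_in_inj : injective trivext_in. Proof. by move=> x y []. Qed.
Lemma trivext_inD x y : trivext_in (x + y) = trivext_in x + trivext_in y.
Proof. by rewrite /trivext_in; congr (_, _); rewrite addr0. Qed.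
Lemma trivext_inN x : trivext_in (- x) = - trivext_in x.
Proof. by rewrite /trivext_in; congr (_, _); rewrite oppr0. Qed.
Lemma trivext_in0 : trivext_in 0 = 0. Proof. by []. Qed.

End TrivialExtension.

Ltac zmod_ring :=
  apply: trivext_in_inj; rewrite ?(trivext_inD, trivext_inN, trivext_in0); ring.

Lemma eq0_modulo_sub (V : zmodType) (X a b : V) : a = b -> X - (a - b) = 0 -> X = 0.
Proof. by move=> ->; rewrite subrr subr0. Qed.

Lemma eq0_modulo_add (V : zmodType) (X a b : V) : a = b -> X + (a - b) = 0 -> X = 0.
Proof. by move=> ->; rewrite subrr addr0. Qed.

Tactic Notation "subtract" constr(H) := apply: (eq0_modulo_sub H).
Tactic Notation "add" constr(H) := apply: (eq0_modulo_add H).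

Lemma pairE (A B : Type) (p q : A * B) : p.1 = q.1 -> p.2 = q.2 -> p = q.
Proof. by case: p q => [? ?] [? ?] /= -> ->. Qed.

Section Trilinear.
Variables (K : fieldType) (A B C W : lmodType K) (f : A -> B -> C -> W).

Definition trilinear_map :=
  (forall (a : K) x x' y z, f (a *: x + x') y z = a *: f x y z + f x' y z) /\
  (forall (a : K) x y y' z, f x (a *: y + y') z = a *: f x y z + f x y' z) /\
  (forall (a : K) x y z z', f x y (a *: z + z') = a *: f x y z + f x y z').

Hypothesis f_tri : trilinear_map.

Lemma triDl x x' y z : f (x + x') y z = f x y z + f x' y z.
Proof. by have [+ _] := f_tri => /(_ 1 x x' y z); rewrite !scale1r. Qed.
Lemma triDm x y y' z : f x (y + y') z = f x y z + f x y' z.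
Proof. by have [_ [+ _]] := f_tri => /(_ 1 x y y' z); rewrite !scale1r. Qed.
Lemma triDr x y z z' : f x y (z + z') = f x y z + f x y z'.
Proof. by have [_ [_ +]] := f_tri => /(_ 1 x y z z'); rewrite !scale1r. Qed.

Lemma tri0l y z : f 0 y z = 0.
Proof. by apply: (@addrI _ (f 0 y z)); rewrite -triDl !addr0. Qed.
Lemma tri0m x z : f x 0 z = 0.
Proof. by apply: (@addrI _ (f x 0 z)); rewrite -triDm !addr0. Qed.
Lemma tri0r x y : f x y 0 = 0.
Proof. by apply: (@addrI _ (f x y 0)); rewrite -triDr !addr0. Qed.

Lemma triNl x y z : f (- x) y z = - f x y z.
Proof. by apply/eqP; rewrite -addr_eq0 -triDl addNr tri0l. Qed.
Lemma triNm x y z : f x (- y) z = - f x y z.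
Proof. by apply/eqP; rewrite -addr_eq0 -triDm addNr tri0m. Qed.
Lemma triNr x y z : f x y (- z) = - f x y z.
Proof. by apply/eqP; rewrite -addr_eq0 -triDr addNr tri0r. Qed.
End Trilinear.

Lemma alternating_skew (K : fieldType) (V : lmodType K) (br : V -> V -> V -> V) :
  trilinear br -> (forall x y, br x x y = 0) -> forall x y z, br x y z = - br y x z.
Proof.
move=> br_tri br_alt x y z; apply/eqP; rewrite -addr_eq0.
have := br_alt (x + y) z.
by rewrite (triDl br_tri) !(triDm br_tri) !br_alt add0r addr0 => /eqP.
Qed.

Lemma lts_rep_trilinear (K : fieldType) (G V : lmodType K) (br : G -> G -> G -> G)
    (rho : G -> G -> V -> V) :
  lts_rep br rho -> trilinear_map rho.
Proof. by case=> [rhoZl [rhoZm [rhoZr _]]]. Qed.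

Lemma matched_pair_trilinear (K : fieldType) (V1 V2 : lmodType K)
    (br1 : V1 -> V1 -> V1 -> V1) (br2 : V2 -> V2 -> V2 -> V2)
    (rho1 : V1 -> V1 -> V2 -> V2) (rho2 : V2 -> V2 -> V1 -> V1) :
  matched_pair br1 br2 rho1 rho2 ->
  [/\ trilinear br1, trilinear br2, trilinear_map rho1 & trilinear_map rho2].
Proof.
by move=> [[br1_tri _] [[br2_tri _]
  [/lts_rep_trilinear rho1_tri [/lts_rep_trilinear rho2_tri _]]]].
Qed.

Definition fundamental_identity (T : zmodType) (br : T -> T -> T -> T) (a b c d e : T) :=
  br a b (br c d e) = br (br a b c) d e + br c (br a b d) e + br c d (br a b e).

Section Homogeneous.
Variables (K : fieldType) (V1 V2 : lmodType K).
Local Notation G := (Gsp V1 V2).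

Definition homogeneous (a : G) := (exists x, a = (x, 0)) \/ (exists u, a = (0, u)).

Lemma additive_eq0_homogeneous (W : zmodType) (f : G -> W) :
    (forall a b, f (a + b) = f a + f b) -> (forall a, homogeneous a -> f a = 0) ->
  forall a, f a = 0.
Proof.
move=> fD f0 [x u].
have -> : (x, u) = (x, 0) + (0, u) :> G by apply: pairE; rewrite /= ?addr0 ?add0r.
by rewrite fD !f0 ?addr0 //; [right; exists u | left; exists x].
Qed.

Lemma trilinear_eq_homogeneous (f g : G -> G -> G -> G) :
    trilinear f -> trilinear g ->
    (forall a b c, homogeneous a -> homogeneous b -> homogeneous c -> f a b c = g a b c) ->
  forall a b c, f a b c = g a b c.
Proof.
move=> f_tri g_tri fg a b c; apply: subr0_eq.
have triE := (triDl f_tri, triDm f_tri, triDr f_tri, triDl g_tri, triDm g_tri, triDr g_tri).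
apply: (additive_eq0_homogeneous (f := fun a => f a b c - g a b c)) a.
  by move=> a a'; rewrite !triE; zmod_ring.
move=> {}a ha; apply: (additive_eq0_homogeneous (f := fun b => f a b c - g a b c)) b.
  by move=> b b'; rewrite !triE; zmod_ring.
move=> {}b hb; apply: (additive_eq0_homogeneous (f := fun c => f a b c - g a b c)) c.
  by move=> c c'; rewrite !triE; zmod_ring.
by move=> {}c hc; apply/eqP; rewrite subr_eq0 fg.
Qed.

Lemma fundamental_identity_homogeneous (br : G -> G -> G -> G) :
    trilinear br ->
    (forall a b c d e, homogeneous a -> homogeneous b -> homogeneous c ->
       homogeneous d -> homogeneous e -> fundamental_identity br a b c d e) ->
  forall a b c d e, fundamental_identity br a b c d e.
Proof.
move=> br_tri FIh a b c d e; apply: subr0_eq.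
have triE := (triDl br_tri, triDm br_tri, triDr br_tri).
pose defect a b c d e :=
  br a b (br c d e) - (br (br a b c) d e + br c (br a b d) e + br c d (br a b e)).
apply: (additive_eq0_homogeneous (f := fun a => defect a b c d e)) a.
  by move=> a a'; rewrite /defect !triE; zmod_ring.
move=> {}a ha; apply: (additive_eq0_homogeneous (f := fun b => defect a b c d e)) b.
  by move=> b b'; rewrite /defect !triE; zmod_ring.
move=> {}b hb; apply: (additive_eq0_homogeneous (f := fun c => defect a b c d e)) c.
  by move=> c c'; rewrite /defect !triE; zmod_ring.
move=> {}c hc; apply: (additive_eq0_homogeneous (f := fun d => defect a b c d e)) d.
  by move=> d d'; rewrite /defect !triE; zmod_ring.
move=> {}d hd; apply: (additive_eq0_homogeneous (f := fun e => defect a b c d e)) e.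
  by move=> e e'; rewrite /defect !triE; zmod_ring.
by move=> {}e he; apply/eqP; rewrite subr_eq0; apply/eqP/FIh.
Qed.

End Homogeneous.

Section Bowtie.
Variables (K : fieldType) (V1 V2 : lmodType K).
Variables (br1 : V1 -> V1 -> V1 -> V1) (br2 : V2 -> V2 -> V2 -> V2).
Variables (rho1 : V1 -> V1 -> V2 -> V2) (rho2 : V2 -> V2 -> V1 -> V1).
Hypotheses (br1_tri : trilinear_map br1) (br2_tri : trilinear_map br2).
Hypotheses (rho1_tri : trilinear_map rho1) (rho2_tri : trilinear_map rho2).
Local Notation bt := (bowtie br1 br2 rho1 rho2).

Local Ltac expand :=
  rewrite /Dof ?(triDl br1_tri, triDm br1_tri, triDr br1_tri,
                 triDl br2_tri, triDm br2_tri, triDr br2_tri,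
                 triDl rho1_tri, triDm rho1_tri, triDr rho1_tri,
                 triDl rho2_tri, triDm rho2_tri, triDr rho2_tri);
  rewrite ?(triNl br1_tri, triNm br1_tri, triNr br1_tri,
            triNl br2_tri, triNm br2_tri, triNr br2_tri,
            triNl rho1_tri, triNm rho1_tri, triNr rho1_tri,
            triNl rho2_tri, triNm rho2_tri, triNr rho2_tri);
  rewrite ?(tri0l br1_tri, tri0m br1_tri, tri0r br1_tri,
            tri0l br2_tri, tri0m br2_tri, tri0r br2_tri,
            tri0l rho1_tri, tri0m rho1_tri, tri0r rho1_tri,
            tri0l rho2_tri, tri0m rho2_tri, tri0r rho2_tri).

Local Ltac finish := expand; zmod_ring.

Local Ltac bowtie_simpl := apply: pairE; rewrite /bowtie /=; finish.

Lemma bowtie_xyz x y z : bt (x, 0) (y, 0) (z, 0) = (br1 x y z, 0).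
Proof. by bowtie_simpl. Qed.
Lemma bowtie_xyw x y w : bt (x, 0) (y, 0) (0, w) = (0, Dof rho1 x y w).
Proof. by bowtie_simpl. Qed.
Lemma bowtie_xvz x v z : bt (x, 0) (0, v) (z, 0) = (0, - rho1 x z v).
Proof. by bowtie_simpl. Qed.
Lemma bowtie_uyz u y z : bt (0, u) (y, 0) (z, 0) = (0, rho1 y z u).
Proof. by bowtie_simpl. Qed.
Lemma bowtie_uvz u v z : bt (0, u) (0, v) (z, 0) = (Dof rho2 u v z, 0).
Proof. by bowtie_simpl. Qed.
Lemma bowtie_uyw u y w : bt (0, u) (y, 0) (0, w) = (- rho2 u w y, 0).
Proof. by bowtie_simpl. Qed.
Lemma bowtie_xvw x v w : bt (x, 0) (0, v) (0, w) = (rho2 v w x, 0).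
Proof. by bowtie_simpl. Qed.
Lemma bowtie_uvw u v w : bt (0, u) (0, v) (0, w) = (0, br2 u v w).
Proof. by bowtie_simpl. Qed.

Definition bowtie_homE := (bowtie_xyz, bowtie_xyw, bowtie_xvz, bowtie_uyz,
  bowtie_uvz, bowtie_uyw, bowtie_xvw, bowtie_uvw).

Lemma bowtie_trilinear : trilinear bt.
Proof.
have [br1Zl [br1Zm br1Zr]] := br1_tri; have [br2Zl [br2Zm br2Zr]] := br2_tri.
have [rho1Zl [rho1Zm rho1Zr]] := rho1_tri; have [rho2Zl [rho2Zm rho2Zr]] := rho2_tri.
have linE := (br1Zl, br1Zm, br1Zr, br2Zl, br2Zm, br2Zr,
              rho1Zl, rho1Zm, rho1Zr, rho2Zl, rho2Zm, rho2Zr).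
split; [|split].
- move=> a [x u] [x' u'] [y v] [z w]; apply: pairE; rewrite /bowtie /Dof /= !linE;
    rewrite ?(scalerDr, scalerBr); zmod_ring.
- move=> a [x u] [y v] [y' v'] [z w]; apply: pairE; rewrite /bowtie /Dof /= !linE;
    rewrite ?(scalerDr, scalerBr); zmod_ring.
- move=> a [x u] [y v] [z w] [z' w']; apply: pairE; rewrite /bowtie /Dof /= !linE;
    rewrite ?(scalerDr, scalerBr); zmod_ring.
Qed.

Local Ltac solve_by_instance H :=
  let E := fresh "E" in
  have E := H; rewrite ?bowtie_homE /= in E; apply: subr0_eq;
  first [ subtract E; finish | add E; finish ].

Lemma matched_pair_of_bowtie_lts : lts bt -> matched_pair br1 br2 rho1 rho2.
Proof.
move=> [_ [bt_alt [bt_jac bt_FI]]].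
have FI1 a b c d e := congr1 fst (bt_FI a b c d e).
have FI2 a b c d e := congr1 snd (bt_FI a b c d e).
split; [|split; [|split; [|split]]].
- split; first exact: br1_tri.
  split; [|split].
  + by move=> x y; solve_by_instance (congr1 fst (bt_alt (x, 0) (y, 0))).
  + by move=> x y z; solve_by_instance (congr1 fst (bt_jac (x, 0) (y, 0) (z, 0))).
  + move=> x1 x2 x3 x4 x5.
    by solve_by_instance (FI1 (x1, 0) (x2, 0) (x3, 0) (x4, 0) (x5, 0)).
- split; first exact: br2_tri.
  split; [|split].
  + by move=> u v; solve_by_instance (congr1 snd (bt_alt (0, u) (0, v))).
  + by move=> u v w; solve_by_instance (congr1 snd (bt_jac (0, u) (0, v) (0, w))).
  + move=> u1 u2 u3 u4 u5.
    by solve_by_instance (FI2 (0, u1) (0, u2) (0, u3) (0, u4) (0, u5)).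
- have [rho1Zl [rho1Zm rho1Zr]] := rho1_tri.
  do 3 (split; first by []); split.
  + by move=> x1 x2 x3 x4 u; solve_by_instance (FI2 (x1, 0) (0, u) (x2, 0) (x3, 0) (x4, 0)).
  + by move=> x1 x2 x3 x4 u; solve_by_instance (FI2 (x1, 0) (x2, 0) (x3, 0) (0, u) (x4, 0)).
- have [rho2Zl [rho2Zm rho2Zr]] := rho2_tri.
  do 3 (split; first by []); split.
  + by move=> u1 u2 u3 u4 x; solve_by_instance (FI1 (0, u1) (x, 0) (0, u2) (0, u3) (0, u4)).
  + by move=> u1 u2 u3 u4 x; solve_by_instance (FI1 (0, u1) (0, u2) (0, u3) (x, 0) (0, u4)).
split; [|split; [|split; [|split; [|split]]]].
- by move=> x y z u v; solve_by_instance (FI1 (x, 0) (y, 0) (z, 0) (0, u) (0, v)).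
- by move=> x y z u v; solve_by_instance (FI1 (z, 0) (0, u) (x, 0) (y, 0) (0, v)).
- by move=> x y z u v; solve_by_instance (FI1 (x, 0) (0, u) (0, v) (y, 0) (z, 0)).
- by move=> x y u v w; solve_by_instance (FI2 (0, u) (0, v) (x, 0) (0, w) (y, 0)).
- by move=> x y u v w; solve_by_instance (FI2 (x, 0) (0, w) (0, u) (0, v) (y, 0)).
- by move=> x y u v w; solve_by_instance (FI2 (x, 0) (0, u) (y, 0) (0, v) (0, w)).
Qed.

Section MatchedPair.
Hypothesis mp : matched_pair br1 br2 rho1 rho2.

Lemma bowtie_alternating a b : bt a a b = 0.
Proof.
have [[_ [alt1 _]] [[_ [alt2 _]] _]] := mp.
by case: a b => [x u] [z w]; apply: pairE; rewrite /bowtie /Dof /= ?alt1 ?alt2; zmod_ring.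
Qed.

Lemma bowtie_jacobi a b c : bt a b c + bt b c a + bt c a b = 0.
Proof.
have [[_ [_ [jac1 _]]] [[_ [_ [jac2 _]]] _]] := mp.
case: a b c => [x1 u1] [x2 u2] [x3 u3]; apply: pairE; rewrite /bowtie /=.
- by subtract (jac1 x1 x2 x3); finish.
- by subtract (jac2 u1 u2 u3); finish.
Qed.

Lemma bowtie_fundamental_fst a b c d e :
    homogeneous a -> homogeneous b -> homogeneous c -> homogeneous d -> homogeneous e ->
  (bt a b (bt c d e)).1 = (bt (bt a b c) d e + bt c (bt a b d) e + bt c d (bt a b e)).1.
Proof.
have [[_ [alt1 [_ F1]]] [_ [_ [[_ [_ [_ [R2a R2b]]]] [C1 [C2 [C3 _]]]]]]] := mp.
have skew1 := alternating_skew br1_tri alt1.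
(* The g1-component vanishes unless an even number of arguments lie in g2; the
   sixteen remaining patterns follow, in lexicographic order. *)
move=> [[x1 ->]|[u1 ->]] [[x2 ->]|[u2 ->]] [[x3 ->]|[u3 ->]]
  [[x4 ->]|[u4 ->]] [[x5 ->]|[u5 ->]];
  rewrite !bowtie_homE /= ?addr0; try reflexivity; apply: subr0_eq.
- by subtract (F1 x1 x2 x3 x4 x5); finish.
- by add (C1 x1 x2 x3 u4 u5); finish.
- by subtract (C1 x1 x2 x4 u3 u5); finish.
- by add (C1 x1 x2 x5 u4 u3); subtract (C1 x1 x2 x5 u3 u4); finish.
- by add (C2 x3 x4 x1 u2 u5); finish.
- by add (skew1 (rho2 u2 u4 x1) x3 x5); subtract (C3 x1 x3 x5 u2 u4); finish.
- by add (C3 x1 x4 x5 u2 u3); finish.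
- by add (R2a u2 u3 u4 u5 x1); finish.
- by subtract (C2 x3 x4 x2 u1 u5); finish.
- by subtract (skew1 (rho2 u1 u4 x2) x3 x5); add (C3 x2 x3 x5 u1 u4); finish.
- by subtract (C3 x2 x4 x5 u1 u3); finish.
- by subtract (R2a u1 u3 u4 u5 x2); finish.
- subtract (C1 x3 x4 x5 u2 u1); add (C1 x3 x4 x5 u1 u2).
  add (skew1 (rho2 u2 u1 x4) x3 x5); subtract (skew1 (rho2 u1 u2 x4) x3 x5).
  add (C3 x3 x4 x5 u2 u1); subtract (C3 x3 x4 x5 u1 u2).
  by subtract (C3 x4 x3 x5 u2 u1); add (C3 x4 x3 x5 u1 u2); finish.
- by add (R2b u1 u2 u4 u5 x3); finish.
- by subtract (R2b u1 u2 u3 u5 x4); finish.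
- by subtract (R2b u1 u2 u3 u4 x5); add (R2b u1 u2 u4 u3 x5); finish.
Qed.

Lemma bowtie_fundamental_snd a b c d e :
    homogeneous a -> homogeneous b -> homogeneous c -> homogeneous d -> homogeneous e ->
  (bt a b (bt c d e)).2 = (bt (bt a b c) d e + bt c (bt a b d) e + bt c d (bt a b e)).2.
Proof.
have [_ [[_ [alt2 [_ F2]]] [[_ [_ [_ [R1a R1b]]]] [_ [_ [_ [_ [C4 [C5 C6]]]]]]]]] := mp.
have skew2 := alternating_skew br2_tri alt2.
move=> [[x1 ->]|[u1 ->]] [[x2 ->]|[u2 ->]] [[x3 ->]|[u3 ->]]
  [[x4 ->]|[u4 ->]] [[x5 ->]|[u5 ->]];
  rewrite !bowtie_homE /= ?addr0; try reflexivity; apply: subr0_eq.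
- by subtract (R1b x1 x2 x3 x4 u5); add (R1b x1 x2 x4 x3 u5); finish.
- by subtract (R1b x1 x2 x3 x5 u4); finish.
- by add (R1b x1 x2 x4 x5 u3); finish.
- subtract (C4 x2 x1 u3 u4 u5); add (C4 x1 x2 u3 u4 u5).
  add (skew2 (rho1 x2 x1 u4) u3 u5); subtract (skew2 (rho1 x1 x2 u4) u3 u5).
  add (C6 x2 x1 u3 u4 u5); subtract (C6 x1 x2 u3 u4 u5).
  by subtract (C6 x2 x1 u4 u3 u5); add (C6 x1 x2 u4 u3 u5); finish.
- by subtract (R1a x1 x3 x4 x5 u2); finish.
- by subtract (C6 x1 x3 u2 u4 u5); finish.
- by subtract (skew2 (rho1 x1 x4 u2) u3 u5); add (C6 x1 x4 u2 u3 u5); finish.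
- by subtract (C5 x1 x5 u3 u4 u2); finish.
- by add (R1a x2 x3 x4 x5 u1); finish.
- by add (C6 x2 x3 u1 u4 u5); finish.
- by add (skew2 (rho1 x2 x4 u1) u3 u5); subtract (C6 x2 x4 u1 u3 u5); finish.
- by add (C5 x2 x5 u3 u4 u1); finish.
- by add (C4 x4 x3 u1 u2 u5); subtract (C4 x3 x4 u1 u2 u5); finish.
- by subtract (C4 x3 x5 u1 u2 u4); finish.
- by add (C4 x4 x5 u1 u2 u3); finish.
- by subtract (F2 u1 u2 u3 u4 u5); finish.
Qed.

Lemma bowtie_lts : lts bt.
Proof.
split; first exact: bowtie_trilinear.
split; first exact: bowtie_alternating.
split; first exact: bowtie_jacobi.
apply: fundamental_identity_homogeneous; first exact: bowtie_trilinear.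
by move=> a b c d e ha hb hc hd he; apply: pairE;
  [apply: bowtie_fundamental_fst | apply: bowtie_fundamental_snd].
Qed.

End MatchedPair.

End Bowtie.

Section Restriction.
Variables (K : fieldType) (V1 V2 : lmodType K).
Local Notation G := (Gsp V1 V2).
Variable brG : G -> G -> G -> G.

Lemma pair_linl (a : K) (x x' : V1) : ((a *: x + x', 0) : G) = a *: (x, 0) + (x', 0).
Proof. by apply: pairE; rewrite /= ?scaler0 ?addr0. Qed.

Lemma pair_linr (a : K) (u u' : V2) : ((0, a *: u + u') : G) = a *: (0, u) + (0, u').
Proof. by apply: pairE; rewrite /= ?scaler0 ?addr0. Qed.

Section TrilinearBracket.
Hypothesis brG_tri : trilinear brG.

Lemma res1_trilinear : trilinear_map (res1 brG).
Proof.
have [brGZl [brGZm brGZr]] := brG_tri.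
by split; [|split] => a *; rewrite /res1 pair_linl ?(brGZl, brGZm, brGZr).
Qed.

Lemma res2_trilinear : trilinear_map (res2 brG).
Proof.
have [brGZl [brGZm brGZr]] := brG_tri.
by split; [|split] => a *; rewrite /res2 pair_linr ?(brGZl, brGZm, brGZr).
Qed.

Lemma rho1_of_trilinear : trilinear_map (rho1_of brG).
Proof.
have [brGZl [brGZm brGZr]] := brG_tri.
by split; [|split] => a *; rewrite /rho1_of ?pair_linl ?pair_linr ?(brGZl, brGZm, brGZr).
Qed.

Lemma rho2_of_trilinear : trilinear_map (rho2_of brG).
Proof.
have [brGZl [brGZm brGZr]] := brG_tri.
by split; [|split] => a *; rewrite /rho2_of ?pair_linl ?pair_linr ?(brGZl, brGZm, brGZr).
Qed.

End TrilinearBracket.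

Lemma bowtie_restrict : strict_twilled brG ->
  forall a b c, bowtie (res1 brG) (res2 brG) (rho1_of brG) (rho2_of brG) a b c = brG a b c.
Proof.
move=> [[brG_tri [altG [jacG _]]] [xyz2 [uvw1 [xyw1 [uyz1 [xvz1 [uvz2 [xvw2 uyw2]]]]]]]].
have skewG := alternating_skew brG_tri altG.
have res1_tri := res1_trilinear brG_tri; have res2_tri := res2_trilinear brG_tri.
have rho1_tri := rho1_of_trilinear brG_tri; have rho2_tri := rho2_of_trilinear brG_tri.
have restrictE := bowtie_homE res1_tri res2_tri rho1_tri rho2_tri.
have bowtie_tri := bowtie_trilinear res1_tri res2_tri rho1_tri rho2_tri.
apply: (trilinear_eq_homogeneous bowtie_tri brG_tri).
move=> a b c [[x ->]|[u ->]] [[y ->]|[v ->]] [[z ->]|[w ->]];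
  rewrite restrictE; apply: pairE; rewrite /= /res1 /res2 /rho1_of /rho2_of /Dof;
  rewrite ?(xyz2, uvw1, xyw1, uyz1, xvz1, uvz2, xvw2, uyw2) //.
all: apply: subr0_eq.
- add (congr1 snd (jacG (x, 0) (y, 0) (0, w))).
  by subtract (congr1 snd (skewG (y, 0) (0, w) (x, 0))); rewrite /=; zmod_ring.
- by add (congr1 snd (skewG (x, 0) (0, v) (z, 0))); rewrite /=; zmod_ring.
- by add (congr1 fst (skewG (y, 0) (0, u) (0, w))); rewrite /=; zmod_ring.
- add (congr1 fst (jacG (0, u) (0, v) (z, 0))).
  by subtract (congr1 fst (skewG (0, v) (z, 0) (0, u))); rewrite /=; zmod_ring.
Qed.

End Restriction.

Theorem theorem5p4 (K : fieldType) (V1 V2 : lmodType K)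
    (hK : [pchar K] =i pred0) :
  (* matched pair |-> strict twilled LTS via the bowtie bracket *)
  (forall (br1 : V1 -> V1 -> V1 -> V1) (br2 : V2 -> V2 -> V2 -> V2)
          (rho1 : V1 -> V1 -> V2 -> V2) (rho2 : V2 -> V2 -> V1 -> V1),
      matched_pair br1 br2 rho1 rho2 -> strict_twilled (bowtie br1 br2 rho1 rho2)) /\
  (* strict twilled LTS |-> matched pair via restriction *)
  (forall brG : Gsp V1 V2 -> Gsp V1 V2 -> Gsp V1 V2 -> Gsp V1 V2,
      strict_twilled brG ->
      matched_pair (res1 brG) (res2 brG) (rho1_of brG) (rho2_of brG)) /\
  (* the two constructions are mutually inverse *)
  (forall (br1 : V1 -> V1 -> V1 -> V1) (br2 : V2 -> V2 -> V2 -> V2)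
          (rho1 : V1 -> V1 -> V2 -> V2) (rho2 : V2 -> V2 -> V1 -> V1),
      matched_pair br1 br2 rho1 rho2 ->
      (forall x y z, res1 (bowtie br1 br2 rho1 rho2) x y z = br1 x y z) /\
      (forall u v w, res2 (bowtie br1 br2 rho1 rho2) u v w = br2 u v w) /\
      (forall x y u, rho1_of (bowtie br1 br2 rho1 rho2) x y u = rho1 x y u) /\
      (forall u v x, rho2_of (bowtie br1 br2 rho1 rho2) u v x = rho2 u v x)) /\
  (forall brG : Gsp V1 V2 -> Gsp V1 V2 -> Gsp V1 V2 -> Gsp V1 V2,
      strict_twilled brG ->
      forall a b c,
        bowtie (res1 brG) (res2 brG) (rho1_of brG) (rho2_of brG) a b c = brG a b c).
Proof.
split; [|split; [|split]].
- move=> br1 br2 rho1 rho2 mp.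
  have [br1_tri br2_tri rho1_tri rho2_tri] := matched_pair_trilinear mp.
  have bowtieE := bowtie_homE br1_tri br2_tri rho1_tri rho2_tri.
  split; first exact: bowtie_lts.
  by do !split=> *; rewrite bowtieE.
- move=> brG tw; have [[brG_tri _] _] := tw.
  apply: (matched_pair_of_bowtie_lts (res1_trilinear brG_tri) (res2_trilinear brG_tri)
    (rho1_of_trilinear brG_tri) (rho2_of_trilinear brG_tri)).
  suff -> : bowtie (res1 brG) (res2 brG) (rho1_of brG) (rho2_of brG) = brG by case: tw.
  by do 3 apply: functional_extensionality => ?; apply: bowtie_restrict.
- move=> br1 br2 rho1 rho2 mp.
  have [br1_tri br2_tri rho1_tri rho2_tri] := matched_pair_trilinear mp.
  have bowtieE := bowtie_homE br1_tri br2_tri rho1_tri rho2_tri.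
  by split; [|split; [|split]] => *; rewrite /res1 /res2 /rho1_of /rho2_of bowtieE.
- exact: bowtie_restrict.
Qed.
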